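(* Let $f:\mathbb{R}^N\times\mathbb{R}\to\mathbb{R}^N$ be $C^1$ with $f(x,t+T)=f(x,t)$ for all $x,t$, for some $T>0$, and let $x_\ast$ be a $T$-periodic (not necessarily minimal period) solution of $\dot x(t)=f(x(t),t)$. Let $K\in\mathbb{R}^{N\times N}$ be arbitrary. Then the geometric multiplicity of $1$ as an eigenvalue of the monodromy matrix $Y_0(T)$ of the uncontrolled linearization $\dot y(t)=\partial_x f(x_\ast(t),t)y(t)$ equals the geometric multiplicity of $1$ as an eigenvalue of the monodromy operator $Y_1(T)$ of the controlled linearization $\dot y(t)=\partial_x f(x_\ast(t),t)y(t)+K[y(t)-y(t-T)]$. (By convention the geometric multiplicity is $0$ if $1$ is not an eigenvalue.)
   Context: For a $T$-periodic continuous matrix function $A(t)$, $Y_0(t)\in\mathbb{R}^{N\times N}$ denotes the fundamental solution of $\dot y=A(t)y$ with $Y_0(0)=I$; $Y_0(T)$ is the monodromy matrix, its eigenvalues are the Floquet multipliers, and the geometric multiplicity of an eigenvalue $\mu$ is $\dim\{x\in\mathbb{C}^N:\mu x=Y_0(T)x\}$. For the delay equation $\dot y(t)=A(t)y(t)+K[y(t)-y(t-T)]$, for $\phi\in C([-T,0],\mathbb{C}^N)$ let $y^\phi$ be the unique solution on $[-T,\infty)$ with $y^\phi=\phi$ on $[-T,0]$, and set $(Y_1(t)\phi)(\theta)=y^\phi(t+\theta)$, $\theta\in[-T,0]$. The monodromy operator is $Y_1(T)$ acting on $C([-T,0],\mathbb{C}^N)$; its nonzero eigenvalues are the Floquet multipliers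 of the delay equation, and the geometric multiplicity of an eigenvalue $\mu$ is $\dim\{\phi: \mu\phi=Y_1(T)\phi\}$. *)

From HB Require Import structures.
From mathcomp Require Import all_boot all_order all_algebra.
From mathcomp Require Import all_classical all_reals all_analysis.
From mathcomp Require Import Rstruct Rstruct_topology.
From mathcomp Require Import complex.
From Stdlib Require Import Rdefinitions.
Set Implicit Arguments. Unset Strict Implicit. Unset Printing Implicit Defensive.
Import Order.TTheory GRing.Theory Num.Theory.
Import numFieldNormedType.Exports.
Local Open Scope classical_set_scope.
Local Open Scope ring_scope.

Notation CC := (complex R).
Definition cR (r : R) : CC := (r%:C)%C.

Definition reV N (v : 'cV[CC]_N) : 'cV[R]_N := map_mx (@complex.Re R) v.
Definition imV N (v : 'cV[CC]_N) : 'cV[R]_N := map_mx (@complex.Im R) v.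
Definition cmx m n (M : 'M[R]_(m, n)) : 'M[CC]_(m, n) := map_mx cR M.

Definition C1 N (f : 'cV[R]_N -> R -> 'cV[R]_N) : Prop :=
  let F := fun p : ('cV[R]_N * R^o)%type => f p.1 p.2 in
  (forall p, differentiable F p) /\
  (forall v : ('cV[R]_N * R^o)%type, continuous (fun p => 'D_v F p)).

Definition periodic_solution N (f : 'cV[R]_N -> R -> 'cV[R]_N) (T : R)
  (xs : R -> 'cV[R]_N) : Prop :=
  (forall t, xs (t + T) = xs t) /\ (forall t : R^o, is_derive t 1 (xs : R^o -> 'cV[R]_N) (f (xs t) t)).

Definition linA N (f : 'cV[R]_N -> R -> 'cV[R]_N) (xs : R -> 'cV[R]_N)
  (t : R) : 'M[R]_N :=
  \matrix_(i, j) ('D_(delta_mx j 0) (fun x => f x t) (xs t)) i 0.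

Definition fundamental_solution N (A : R -> 'M[R]_N) (Y0 : R -> 'M[R]_N) : Prop :=
  Y0 0 = 1%:M /\ (forall t : R^o, is_derive t 1 (Y0 : R^o -> 'M[R]_N) (A t *m Y0 t)).

(* geometric multiplicity of 1 as eigenvalue of a real matrix M, computed over C:
   dim {x in C^N | 1 x = M x} = dim of the (right) kernel of (M - I) over C *)
Definition geom_mult1 N (M : 'M[R]_N) : nat :=
  \rank (kermx (cmx M - 1%:M)^T).

(* calculus for C^N-valued functions of a real variable, via real and
   imaginary parts (C^N = R^N + i R^N as a real normed space) *)
Definition ccont_within N (D : set R) (y : R -> 'cV[CC]_N) : Prop :=
  {within D, continuous (fun t => reV (y t))} /\
  {within D, continuous (fun t => imV (y t))}.
Definition cderive N (y : R -> 'cV[CC]_N) (t : R) (dy : 'cV[CC]_N) : Prop :=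
  is_derive (t : R^o) 1 (fun s : R^o => reV (y s)) (reV dy) /\
  is_derive (t : R^o) 1 (fun s : R^o => imV (y s)) (imV dy).
Definition cright_derive N (y : R -> 'cV[CC]_N) (t : R) (dy : 'cV[CC]_N) : Prop :=
  ((fun h : R => h^-1 *: (reV (y (t + h)) - reV (y t))) @ 0^'+ --> reV dy) /\
  ((fun h : R => h^-1 *: (imV (y (t + h)) - imV (y t))) @ 0^'+ --> imV dy).

Definition dde_solution N (A : R -> 'M[R]_N) (K : 'M[R]_N) (T : R)
  (phi y : R -> 'cV[CC]_N) : Prop :=
  (forall s, -T <= s <= 0 -> y s = phi s) /\
  ccont_within `[-T, +oo[ y /\
  (forall t, 0 < t ->
     cderive y t (cmx (A t) *m y t + cmx K *m (y t - y (t - T)))) /\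
  cright_derive y 0 (cmx (A 0) *m y 0 + cmx K *m (y 0 - y (0 - T))).

(* the eigenspace {phi in C([-T,0],C^N) | Y1(T) phi = 1 * phi}; an element of
   C([-T,0],C^N) is represented by a function R -> C^N of which only the values on
   [-T,0] matter *)
Definition Y1_eigenspace1 N (A : R -> 'M[R]_N) (K : 'M[R]_N) (T : R) :
  set (R -> 'cV[CC]_N) :=
  [set phi | ccont_within `[-T, 0] phi /\
     exists y, dde_solution A K T phi y /\
       (forall s, -T <= s <= 0 -> y (T + s) = phi s)].

(* the complex subspace S of C(D, C^N) has dimension d: it has a basis of d
   elements (functions being identified when they agree on D) *)
Definition has_dim N (D : set R) (S : set (R -> 'cV[CC]_N)) (d : nat) : Prop :=
  exists b : 'I_d -> R -> 'cV[CC]_N,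
    (forall i, S (b i)) /\
    (forall c : 'I_d -> CC,
        (forall s, D s -> \sum_(i < d) c i *: b i s = 0) -> forall i, c i = 0) /\
    (forall phi, S phi ->
        exists c : 'I_d -> CC, forall s, D s -> phi s = \sum_(i < d) c i *: b i s).

From HB Require Import structures.
From mathcomp Require Import all_boot all_order all_algebra.
From mathcomp Require Import all_classical all_reals all_analysis.
From mathcomp Require Import Rstruct Rstruct_topology.
From mathcomp Require Import complex.
From mathcomp Require Import lra ring.
From Stdlib Require Import Rdefinitions.
Set Implicit Arguments. Unset Strict Implicit. Unset Printing Implicit Defensive.
Import Order.TTheory GRing.Theory Num.Theory.
Import numFieldNormedType.Exports.
Local Open Scope classical_set_scope.
Local Open Scope ring_scope.

(* Let A(t) = d_x f(x*(t), t); it is continuous and T-periodic.  The proof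
   identifies both eigenspaces with the fixed space of the monodromy matrix:
   - Uniqueness for linear ODEs (a Gronwall estimate on |u|^2) shows that every
     solution of y' = A y on [0, b] is t |-> Y0(t) y(0), and that t |-> Y0(t) w
     is T-periodic on [0, oo) whenever Y0(T) w = w.
   - If Y0(T) w = w, the function phi(s) = Y0(s + T) w is T-periodic, so the
     delay term K [y(t) - y(t - T)] vanishes along it and phi is a fixed point
     of the monodromy operator Y1(T).
   - Conversely, for a fixed point phi of Y1(T) with solution y we have
     y(t - T) = phi(t - T) = y(t) on ]0, T], so y solves y' = A y there; hence
     phi(0) = y(T) = Y0(T) phi(0) and phi(s) = y(T + s) = Y0(s + T) phi(0).
   Therefore w |-> Y0(. + T) w is a linear bijection from the fixed space of
   Y0(T) onto the fixed space of Y1(T), and transporting a basis of the former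
   proves the theorem.  Complex-valued functions are handled through their
   real and imaginary parts. *)

Section MatrixCalculus.
Implicit Types (t : R^o).

Lemma is_derive_entry m n (F : R^o -> 'M[R]_(m, n)) t (dF : 'M[R]_(m, n)) i j :
  is_derive t 1 F dF -> is_derive t 1 (fun s : R^o => (F s i j : R^o)) (dF i j).
Proof.
move=> [dF1 vF]; have di := (derivable_mxP F t 1).1 dF1 i j.
by apply: DeriveDef => //; rewrite -vF derive_mx // mxE.
Qed.

Lemma is_derive_mx m n (F : R^o -> 'M[R]_(m, n)) t (dF : 'M[R]_(m, n)) :
  (forall i j, is_derive t 1 (fun s : R^o => (F s i j : R^o)) (dF i j)) ->
  is_derive t 1 F dF.
Proof.
move=> H; have d : derivable F t 1 by apply/derivable_mxP => i j; case: (H i j).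
apply: DeriveDef => //; rewrite derive_mx //; apply/matrixP => i j.
by rewrite mxE; case: (H i j).
Qed.

Lemma is_derive_mulmxr m n p (F : R^o -> 'M[R]_(m, n)) (v : 'M[R]_(n, p)) t dF :
  is_derive t 1 F dF -> is_derive t 1 (fun s : R^o => F s *m v) (dF *m v).
Proof.
move=> dF_F; apply: is_derive_mx => i j; rewrite mxE.
have -> : (fun s : R^o => ((F s *m v) i j : R^o)) =
          \sum_(k < n) ((fun s : R^o => (F s i k : R^o)) * cst (v k j : R^o)).
  by apply/funext => s; rewrite mxE fct_sumE.
apply: is_derive_sum => k; apply: is_derive_eq.
  by apply: is_deriveM; exact: is_derive_entry.
by rewrite scaler0 add0r /= mulrC.
Qed.

End MatrixCalculus.

Section VectorCalculus.
Variable V : normedModType R.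
Implicit Types (F : R^o -> V) (t : R^o) (dF : V).

Lemma is_derive_translate F t c dF :
  is_derive (t + c) 1 F dF -> is_derive t 1 (fun s : R^o => F (s + c)) dF.
Proof.
move=> [d v]; move: d; rewrite /derivable -v /derive /= => d.
have E : (fun h : R^o => h^-1 *: (F (h%:A + t + c) - F (t + c)))
       = (fun h : R^o => h^-1 *: (F (h%:A + (t + c)) - F (t + c))).
  by apply/funext => h; rewrite addrA.
by apply: DeriveDef; rewrite /derivable /derive /= E.
Qed.

Lemma is_derive_right F t dF :
  is_derive t 1 F dF -> (fun h : R => h^-1 *: (F (t + h) - F t)) @ 0^'+ --> dF.
Proof.
move=> [d v]; apply: cvg_dnbhs_at_right.
move: d; rewrite /derivable -v /derive /=.
have -> : (fun h : R^o => h^-1 *: (F (h%:A + t) - F t))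
        = (fun h : R => h^-1 *: (F (t + h) - F t)).
  by rewrite funeqE => h; rewrite -[h%:A]/(h * 1) mulr1 (addrC h).
by [].
Qed.

Lemma is_derive_continuous F t dF : is_derive t 1 F dF -> {for t, continuous F}.
Proof. by move=> [/derivable1_diffP d _]; exact: differentiable_continuous. Qed.

End VectorCalculus.

Lemma is_derive_expR_scale (k t : R) :
  is_derive (t : R^o) 1 (fun s : R^o => (expR (k * s) : R^o)) (k * expR (k * t)).
Proof.
have dk : is_derive (t : R^o) 1 (fun s : R^o => (k * s : R^o)) k.
  have := @is_deriveZ R R^o R^o id k t 1 1 (is_derive_id _ _).
  by rewrite /GRing.scale /= mulr1.
have dexp : is_derive (k * t : R^o) 1 (expR : R^o -> R^o) (expR (k * t)).
  exact: is_derive_expR.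
have dk1 : derivable (fun s : R^o => (k * s : R^o)) t 1 by case: dk.
have dexp1 : derivable (expR : R^o -> R^o) (k * t) 1 by case: dexp.
change (is_derive (t : R^o) 1 (expR \o (fun s : R^o => (k * s : R^o))) (k * expR (k * t))).
apply: DeriveDef.
  by apply/derivable1_diffP; apply: differentiable_comp; exact/derivable1_diffP.
rewrite -derive1E derive1_comp // !derive1E.
by case: dexp => _ ->; case: dk => _ ->; rewrite mulrC.
Qed.

(* Gronwall-type estimate: if g' <= c g on [a,b] and g(a) <= 0, then g <= 0 on
   [a,b]; indeed exp(-c t) g(t) is nonincreasing. *)
Lemma gronwall_le0 (g dg : R -> R) (c a b : R) :
  {within `[a, b], continuous g} ->
  (forall t, a < t < b -> is_derive (t : R^o) 1 (g : R^o -> R^o) (dg t)) ->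
  (forall t, a <= t <= b -> dg t <= c * g t) ->
  g a <= 0 -> forall t, a <= t <= b -> g t <= 0.
Proof.
move=> gc gd dg_le ga t /andP [a_t t_b].
pose h := fun s : R => expR (- c * s) * g s.
have hd : forall x, x \in `]a, t[ ->
    is_derive (x : R^o) 1 (h : R^o -> R^o) (expR (- c * x) * (dg x - c * g x)).
  move=> x; rewrite in_itv /= => /andP [ax xt].
  apply: is_derive_eq.
    apply: is_deriveM (is_derive_expR_scale (- c) x) (gd x _).
    by rewrite ax (lt_le_trans xt t_b).
  rewrite /GRing.scale /=.
  change (expR (- c * x) * dg x + g x * (- c * expR (- c * x)) =
          expR (- c * x) * (dg x - c * g x)).
  by ring.
have hc : {within `[a, t], continuous h}.
  have sub : `[a, t] `<=` `[a, b] by apply: subset_itvl; rewrite bnd_simp.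
  have ec : continuous (fun s : R => expR (- c * s)).
    by move=> y; exact: is_derive_continuous (is_derive_expR_scale (- c) y).
  have gc' : {within `[a, t], continuous g} := continuous_subspaceW sub gc.
  move=> x; have hcx := @continuousM R (subspace `[a, t]) _ g x
    (@continuous_subspaceT _ _ `[a, t] _ ec x) (gc' x).
  exact: hcx.
have [x xin hx] := MVT_segment a_t hd hc.
move: xin; rewrite in_itv /= => /andP [a_x x_t].
have ha : h a <= 0 by rewrite /h pmulr_rle0 // expR_gt0.
have slope : expR (- c * x) * (dg x - c * g x) * (t - a) <= 0.
  apply: mulr_le0_ge0; last by rewrite subr_ge0.
  rewrite pmulr_rle0 ?expR_gt0 // subr_le0; apply: dg_le.
  by rewrite a_x (le_trans x_t t_b).
have ht : h t <= 0 by rewrite -[h t](subrK (h a)) hx; lra.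
by move: ht; rewrite /h pmulr_rle0 // expR_gt0.
Qed.

Definition sqnorm N (v : 'cV[R]_N) : R := \sum_i (v i 0) ^+ 2.

Lemma sqnorm_ge0 N (v : 'cV[R]_N) : 0 <= sqnorm v.
Proof. by apply: sumr_ge0 => i _; exact: sqr_ge0. Qed.

Lemma sqnorm_eq0 N (v : 'cV[R]_N) : sqnorm v = 0 -> v = 0.
Proof.
move=> v0; apply/matrixP => i j; rewrite (ord1 j) mxE.
have := psumr_eq0P (fun i _ => sqr_ge0 (v i 0)) v0 (i := i) isT.
by move/eqP; rewrite sqrf_eq0 => /eqP.
Qed.

Lemma sqnorm_continuous N : continuous (@sqnorm N).
Proof.
have := @continuous_big R^o 'I_N +%R 0 xpredT add_continuous _ (index_enum 'I_N)
  (fun i (w : 'cV[R]_N) => ((w i 0) ^+ 2 : R^o)).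
apply => i _ v.
apply: (@continuousM _ _ (fun w : 'cV[R]_N => w i 0) (fun w : 'cV[R]_N => w i 0));
  exact: coord_continuous.
Qed.

Lemma is_derive_sqnorm N (u : R^o -> 'cV[R]_N) (t : R^o) (du : 'cV[R]_N) :
  is_derive t 1 u du ->
  is_derive t 1 (fun s : R^o => (sqnorm (u s) : R^o)) (\sum_i 2 * u t i 0 * du i 0).
Proof.
move=> dU.
have -> : (fun s : R^o => (sqnorm (u s) : R^o)) =
          \sum_i ((fun s : R^o => (u s i 0 : R^o)) * (fun s : R^o => (u s i 0 : R^o))).
  by apply/funext => s; rewrite fct_sumE; apply: eq_bigr => i _; rewrite expr2.
apply: is_derive_sum => i; have := is_derive_entry i 0 dU => dUi.
by apply: is_derive_eq; rewrite /GRing.scale /=; ring.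
Qed.

Lemma two_prod_le (x y a M : R) : `|a| <= M -> 2 * x * a * y <= M * (x ^+ 2 + y ^+ 2).
Proof.
move=> /ler_normlP [h1 h2].
have e1 : 0 <= (M - a) * (x + y) ^+ 2 by apply: mulr_ge0; [lra | exact: sqr_ge0].
have e2 : 0 <= (M + a) * (x - y) ^+ 2 by apply: mulr_ge0; [lra | exact: sqr_ge0].
nra.
Qed.

(* If all entries of A are bounded by M, then 2 <u, A u> <= 2 N M |u|^2; this is
   the energy estimate behind uniqueness for linear ODEs. *)
Lemma quadratic_form_bound N (A : 'M[R]_N) (u : 'cV[R]_N) (M : R) :
  (forall i j, `|A i j| <= M) ->
  \sum_i 2 * u i 0 * (A *m u) i 0 <= 2 * N%:R * M * sqnorm u.
Proof.
move=> AM.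
have -> : \sum_i 2 * u i 0 * (A *m u) i 0 = \sum_i \sum_k 2 * u i 0 * A i k * u k 0.
  by apply: eq_bigr => i _; rewrite mxE mulr_sumr; apply: eq_bigr => k _; rewrite mulrA.
apply: le_trans (_ : \sum_(i < N) \sum_(k < N) M * ((u i 0) ^+ 2 + (u k 0) ^+ 2) <= _).
  by apply: ler_sum => i _; apply: ler_sum => k _; exact: two_prod_le.
rewrite (eq_bigr (fun i => N%:R * M * (u i 0) ^+ 2 + M * sqnorm u)); last first.
  move=> i _; under eq_bigr do rewrite mulrDr.
  rewrite big_split /= sumr_const card_ord -mulr_sumr -mulr_natr.
  by congr (_ + _); ring.
rewrite big_split /= -mulr_sumr sumr_const card_ord -mulr_natr -/(sqnorm u).
nra.
Qed.

Lemma mx_bounded_on_segment N (A : R -> 'M[R]_N) (a b : R) : a <= b ->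
  (forall i j, {within `[a, b], continuous (fun t => A t i j)}) ->
  exists2 M : R, 0 <= M & forall t, a <= t <= b -> forall i j, `|A t i j| <= M.
Proof.
move=> ab Ac.
have maxA : forall ij : 'I_N * 'I_N, exists c : R, c \in `[a, b] /\
    forall t, t \in `[a, b] -> `|A t ij.1 ij.2| <= `|A c ij.1 ij.2|.
  move=> [i j].
  have cn : {within `[a, b], continuous (fun t => `|A t i j|)}.
    by move=> x; apply: (continuous_comp (Ac i j x)); exact: (@norm_continuous _ R^o).
  by have [c c1 c2] := EVT_max ab cn; exists c.
have [c Hc] := choice maxA.
exists (\sum_ij `|A (c ij) ij.1 ij.2|); first by apply: sumr_ge0 => ij _.
move=> t tab i j; apply: le_trans ((Hc (i, j)).2 t _) _; first by rewrite in_itv /= tab.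
by rewrite (bigD1 (i, j)) //= ler_wpDr // sumr_ge0.
Qed.

Lemma linear_ode_unique N (A : R -> 'M[R]_N) (a b : R) (u : R -> 'cV[R]_N) :
  (forall i j, {within `[a, b], continuous (fun t => A t i j)}) -> a <= b ->
  {within `[a, b], continuous u} ->
  (forall t, a < t < b -> is_derive (t : R^o) 1 (u : R^o -> 'cV[R]_N) (A t *m u t)) ->
  u a = 0 -> forall t, a <= t <= b -> u t = 0.
Proof.
move=> Ac ab uc ud ua0 t tab.
have [M M0 AM] := mx_bounded_on_segment ab Ac.
have gc : {within `[a, b], continuous (fun s => sqnorm (u s))}.
  move=> x; exact: (@continuous_comp _ _ _ (from_subspace `[a, b] u) (@sqnorm N) x
    (uc x) (@sqnorm_continuous N _)).
apply: sqnorm_eq0; apply/eqP; rewrite eq_le sqnorm_ge0 andbT.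
apply: (gronwall_le0 gc (fun s s_ab => is_derive_sqnorm (ud s s_ab)) _ _ tab).
  by move=> s s_ab; exact: quadratic_form_bound (AM s s_ab).
by rewrite ua0 /sqnorm big1 // => i _; rewrite mxE expr0n.
Qed.

Lemma Re_sum n (F : 'I_n -> CC) : complex.Re (\sum_i F i) = \sum_i complex.Re (F i).
Proof. exact: (raddf_sum (@complex.Re R : Rcomplex R -> R)). Qed.

Lemma Im_sum n (F : 'I_n -> CC) : complex.Im (\sum_i F i) = \sum_i complex.Im (F i).
Proof. exact: (raddf_sum (@complex.Im R : Rcomplex R -> R)). Qed.

Lemma reVM N (M : 'M[R]_N) (v : 'cV[CC]_N) : reV (cmx M *m v) = M *m reV v.
Proof.
apply/matrixP => i j; rewrite !mxE Re_sum; apply: eq_bigr => k _.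
by rewrite !mxE; case: (v k j) => a b /=; rewrite mul0r subr0.
Qed.

Lemma imVM N (M : 'M[R]_N) (v : 'cV[CC]_N) : imV (cmx M *m v) = M *m imV v.
Proof.
apply/matrixP => i j; rewrite !mxE Im_sum; apply: eq_bigr => k _.
by rewrite !mxE; case: (v k j) => a b /=; rewrite mul0r addr0.
Qed.

Lemma reimV_inj N (a b : 'cV[CC]_N) : reV a = reV b -> imV a = imV b -> a = b.
Proof.
move=> /matrixP Hr /matrixP Hi; apply/matrixP => i j.
have := Hr i j; have := Hi i j; rewrite !mxE.
by case: (a i j) => ? ?; case: (b i j) => ? ? /= -> ->.
Qed.

Lemma cderive_right N (y : R -> 'cV[CC]_N) (t : R) (dy : 'cV[CC]_N) :
  cderive y t dy -> cright_derive y t dy.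
Proof. by move=> [dre dim]; split; exact: is_derive_right. Qed.

Lemma cderive_ccont N (y dy : R -> 'cV[CC]_N) (D : set R) :
  (forall t, cderive y t (dy t)) -> ccont_within D y.
Proof.
move=> dY; split; apply: continuous_subspaceT => t; have [dre dim] := dY t.
- exact: is_derive_continuous dre.
- exact: is_derive_continuous dim.
Qed.

Lemma D_partial N (f : 'cV[R]_N -> R -> 'cV[R]_N) (x e : 'cV[R]_N) (t : R) :
  'D_e (fun y => f y t) x =
  'D_((e, 0) : ('cV[R]_N * R^o)%type) (fun p : ('cV[R]_N * R^o)%type => f p.1 p.2) (x, t).
Proof.
rewrite /derive /=; congr lim; f_equal.
by rewrite funeqE => h; rewrite scaler0 add0r.
Qed.

Lemma linA_continuous N (f : 'cV[R]_N -> R -> 'cV[R]_N) (xs : R -> 'cV[R]_N) :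
  C1 f -> (forall t : R^o, is_derive t 1 (xs : R^o -> 'cV[R]_N) (f (xs t) t)) ->
  forall i j, continuous (fun t : R => linA f xs t i j).
Proof.
move=> [_ Dc] xd i j t.
have -> : (fun t : R => linA f xs t i j) =
   (fun M : 'cV[R]_N => M i 0) \o (fun p : ('cV[R]_N * R^o)%type =>
       'D_((delta_mx j 0, 0) : ('cV[R]_N * R^o)%type)
          (fun p : ('cV[R]_N * R^o)%type => f p.1 p.2) p)
     \o (fun s : R => ((xs s, s) : ('cV[R]_N * R^o)%type)).
  by apply/funext => s; rewrite /linA /= mxE D_partial.
apply: continuous_comp; first exact: cvg_pair (is_derive_continuous (xd t)) cvg_id.
apply: continuous_comp; first exact: Dc.
exact: (@coord_continuous R N 1 i 0 _).
Qed.

Lemma linA_periodic N (f : 'cV[R]_N -> R -> 'cV[R]_N) (xs : R -> 'cV[R]_N) (T : R) :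
  (forall x t, f x (t + T) = f x t) -> (forall t, xs (t + T) = xs t) ->
  forall t, linA f xs (t + T) = linA f xs t.
Proof.
move=> fp xp t; rewrite /linA xp.
by have -> : (fun x => f x (t + T)) = (fun x => f x t) by apply/funext => x; rewrite fp.
Qed.

Section PeriodicLinearSystem.
Variables (N : nat) (A : R -> 'M[R]_N) (Y0 : R -> 'M[R]_N) (T : R).
Hypothesis A_cont : forall i j, continuous (fun t => A t i j).
Hypothesis A_per : forall t, A (t + T) = A t.
Hypothesis Y0_deriv : forall t : R^o, is_derive t 1 (Y0 : R^o -> 'M[R]_N) (A t *m Y0 t).
Hypothesis Y0_0 : Y0 0 = 1%:M.

Lemma is_derive_orbit (c : R) (v : 'cV[R]_N) (t : R^o) :
  is_derive t 1 (fun s : R^o => Y0 (s + c) *m v) (A (t + c) *m (Y0 (t + c) *m v)).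
Proof.
rewrite mulmxA; apply: (is_derive_mulmxr v (F := fun s : R^o => Y0 (s + c))).
exact: is_derive_translate (Y0_deriv (t + c)).
Qed.

Lemma fundamental_solution_unique (b : R) (z : R -> 'cV[R]_N) : 0 <= b ->
  {within `[0, b], continuous z} ->
  (forall t, 0 < t < b -> is_derive (t : R^o) 1 (z : R^o -> 'cV[R]_N) (A t *m z t)) ->
  forall t, 0 <= t <= b -> z t = Y0 t *m z 0.
Proof.
move=> b0 zc zd t tb.
pose u s := z s - Y0 s *m z 0.
have ud : forall s, 0 < s < b -> is_derive (s : R^o) 1 (u : R^o -> 'cV[R]_N) (A s *m u s).
  move=> s sb; apply: is_derive_eq.
    by apply: is_deriveB; [exact: zd | exact: is_derive_mulmxr (Y0_deriv s)].
  by rewrite /u mulmxBr !mulmxA.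
have uc : {within `[0, b], continuous u}.
  move=> x; have ux := @continuousB R 'cV[R]_N (subspace `[0, b]) z (fun s => Y0 s *m z 0)
    x (zc x) (@continuous_subspaceT _ _ `[0, b] (fun s : R => Y0 s *m z 0)
      (fun s => is_derive_continuous (is_derive_mulmxr (z 0) (Y0_deriv s))) x).
  exact: ux.
suff : u t = 0 by move/eqP; rewrite subr_eq0 => /eqP.
apply: (linear_ode_unique (fun i j => continuous_subspaceT (@A_cont i j)) b0 uc ud _ tb).
by rewrite /u Y0_0 mul1mx subrr.
Qed.

Lemma fundamental_solution_uniqueC (b : R) (y : R -> 'cV[CC]_N) : 0 <= b ->
  ccont_within `[0, b] y -> (forall t, 0 < t < b -> cderive y t (cmx (A t) *m y t)) ->
  forall t, 0 <= t <= b -> y t = cmx (Y0 t) *m y 0.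
Proof.
move=> b0 [ycr yci] yd t tb; apply: reimV_inj; rewrite ?(reVM, imVM).
- apply: (fundamental_solution_unique (b := b) (z := fun s => reV (y s))) => // s sb.
  by rewrite -reVM; case: (yd s sb).
- apply: (fundamental_solution_unique (b := b) (z := fun s => imV (y s))) => // s sb.
  by rewrite -imVM; case: (yd s sb).
Qed.

(* If Y0(T) v = v then Y0(s) v = Y0(s - T) v for s >= T: both sides solve
   y' = A y (A being T-periodic) and agree at s = T. *)
Lemma monodromy_fixed_orbit (v : 'cV[R]_N) : Y0 T *m v = v ->
  forall s, T <= s -> Y0 s *m v = Y0 (s - T) *m v.
Proof.
move=> Yv s Ts.
pose u (t : R) := Y0 t *m v - Y0 (t - T) *m v.
have ud : forall t : R^o, is_derive t 1 (u : R^o -> 'cV[R]_N) (A t *m u t).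
  move=> t; apply: is_derive_eq.
    apply: is_deriveB; first exact: is_derive_mulmxr (Y0_deriv t).
    exact: is_derive_orbit.
  have -> : A (t - T) = A t by rewrite -{2}(subrK T t) A_per.
  by rewrite /u mulmxBr !mulmxA.
suff : u s = 0 by move/eqP; rewrite subr_eq0 => /eqP.
apply: (linear_ode_unique (fun i j => continuous_subspaceT (@A_cont i j)) Ts
  (continuous_subspaceT (fun t => is_derive_continuous (ud t))) (fun t _ => ud t)).
- by rewrite /u RminusE subrr Yv Y0_0 mul1mx subrr.
- by rewrite lexx Ts.
Qed.

Lemma monodromy_fixed_orbitC (w : 'cV[CC]_N) : cmx (Y0 T) *m w = w ->
  forall s, T <= s -> cmx (Y0 s) *m w = cmx (Y0 (s - T)) *m w.
Proof.
move=> Yw s Ts; apply: reimV_inj; rewrite !(reVM, imVM);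
  apply: monodromy_fixed_orbit => //.
- by rewrite -reVM Yw.
- by rewrite -imVM Yw.
Qed.

Definition eigfun (w : 'cV[CC]_N) (s : R) : 'cV[CC]_N := cmx (Y0 (s + T)) *m w.

Lemma eigfun0 (w : 'cV[CC]_N) : eigfun w 0 = cmx (Y0 T) *m w.
Proof. by rewrite /eigfun RplusE add0r. Qed.

Lemma eigfun_lincomb d (c : 'I_d -> CC) (v : 'I_d -> 'cV[CC]_N) (s : R) :
  eigfun (\sum_i c i *: v i) s = \sum_i c i *: eigfun (v i) s.
Proof. by rewrite /eigfun mulmx_sumr; apply: eq_bigr => i _; rewrite scalemxAr. Qed.

Lemma cderive_eigfun (w : 'cV[CC]_N) (t : R) :
  cderive (eigfun w) t (cmx (A t) *m eigfun w t).
Proof.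
rewrite /eigfun; split.
- have -> : (fun s : R^o => reV (cmx (Y0 (s + T)) *m w)) =
            (fun s : R^o => Y0 (s + T) *m reV w) by apply/funext => s; rewrite reVM.
  by rewrite !reVM -A_per; exact: is_derive_orbit.
- have -> : (fun s : R^o => imV (cmx (Y0 (s + T)) *m w)) =
            (fun s : R^o => Y0 (s + T) *m imV w) by apply/funext => s; rewrite imVM.
  by rewrite !imVM -A_per; exact: is_derive_orbit.
Qed.

Lemma eigfun_periodic (w : 'cV[CC]_N) : cmx (Y0 T) *m w = w ->
  forall s, -T <= s -> eigfun w (s + T) = eigfun w s.
Proof.
move=> Yw s sT; rewrite /eigfun (monodromy_fixed_orbitC Yw).
  by rewrite RminusE !RplusE addrK.
by rewrite !RplusE; lra.
Qed.

(* If Y0(T) w = w, then eigfun w is a fixed point of the monodromy operator: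
   being T-periodic, it kills the delay term K [y(t) - y(t - T)]. *)
Lemma eigfun_in_eigenspace (K : 'M[R]_N) (w : 'cV[CC]_N) : cmx (Y0 T) *m w = w ->
  Y1_eigenspace1 A K T (eigfun w).
Proof.
move=> Yw.
have ccont D : ccont_within D (eigfun w) := cderive_ccont D (cderive_eigfun w).
have delay0 t : 0 <= t -> eigfun w t - eigfun w (t - T) = 0.
  by move=> t0; rewrite -{1}(subrK T t) eigfun_periodic ?subrr //; lra.
split; first exact: ccont.
exists (eigfun w); split; last by move=> s /andP [sT _]; rewrite addrC eigfun_periodic.
split => //; split; first exact: ccont.
split => [t t0|].
- by rewrite delay0 ?ltW // mulmx0 addr0; exact: cderive_eigfun.
- by rewrite delay0 // mulmx0 addr0; apply: cderive_right; exact: cderive_eigfun.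
Qed.

(* Conversely, a fixed point phi of Y1(T) satisfies y(t - T) = phi(t - T) = y(t)
   on ]0, T], so the delay term vanishes there and y(t) = Y0(t) phi(0); hence
   phi(0) is fixed by Y0(T) and phi = eigfun (phi 0) on [-T, 0]. *)
Lemma eigenspace_eigfun (K : 'M[R]_N) (phi : R -> 'cV[CC]_N) : 0 < T ->
  Y1_eigenspace1 A K T phi ->
  cmx (Y0 T) *m phi 0 = phi 0 /\ forall s, -T <= s <= 0 -> phi s = eigfun (phi 0) s.
Proof.
move=> T0 [_ [y [[y_phi [[ycr yci] [yd _]]] y_eig]]].
have mT0 : -T <= 0 by rewrite oppr_le0 ltW.
have y0 : y 0 = phi 0 by apply: y_phi; rewrite mT0 lexx.
have delay0 t : 0 < t <= T -> y t - y (t - T) = 0.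
  move=> /andP [t0 tT]; have r : -T <= t - T <= 0 by apply/andP; split; lra.
  by have := y_eig _ r; rewrite addrC subrK => ->; rewrite (y_phi _ r) subrr.
have sub : `[0, T] `<=` `[- T, +oo[.
  by move=> x /=; rewrite !in_itv /= andbT => /andP [x0 _]; exact: le_trans mT0 x0.
have ysol : forall t, 0 <= t <= T -> y t = cmx (Y0 t) *m phi 0.
  rewrite -y0; apply: fundamental_solution_uniqueC; first exact: ltW.
    by split; exact: continuous_subspaceW sub _.
  move=> t /andP [t0 tT]; have := yd t t0.
  by rewrite delay0 ?t0 ?ltW // mulmx0 addr0.
have yT : y T = phi 0 by have := y_eig 0; rewrite addr0 => ->; rewrite // mT0 lexx.
split; first by rewrite -(ysol T) ?lexx ?ltW.
move=> s sT; have sT' : 0 <= T + s <= T.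
  by move: sT => /andP [s1 s2]; apply/andP; split; lra.
by rewrite -(y_eig s sT) ysol // /eigfun addrC.
Qed.

End PeriodicLinearSystem.

Lemma trmx_mul_row_lincomb (F : fieldType) d n (r : 'rV[F]_d) (B : 'M[F]_(d, n)) :
  (r *m B)^T = \sum_i r 0 i *: (row i B)^T.
Proof. by rewrite mulmx_sum_row raddf_sum /=; apply: eq_bigr => i _; rewrite linearZ. Qed.

Lemma fixed_space_basis (F : fieldType) n (M : 'M[F]_n) :
  exists v : 'I_(\rank (kermx (M - 1%:M)^T)) -> 'cV[F]_n,
    [/\ forall i, M *m v i = v i,
        forall c, \sum_i c i *: v i = 0 -> forall i, c i = 0 &
        forall w, M *m w = w -> exists c, w = \sum_i c i *: v i].
Proof.
set B := (M - 1%:M)^T; set Kb := row_base (kermx B).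
have fixedE w : (M *m w == w) = (w^T <= Kb)%MS.
  have E : w^T *m B = (M *m w - w)^T by rewrite /B -trmx_mul mulmxBl mul1mx.
  rewrite eq_row_base -subr_eq0; apply/eqP/sub_kermxP => [w_fix|].
    by rewrite E w_fix trmx0.
  by rewrite E => /(congr1 trmx); rewrite trmxK trmx0.
exists (fun i => (row i Kb)^T); split.
- by move=> i; apply/eqP; rewrite fixedE trmxK row_sub.
- move=> c c0 i.
  have cKb : (\row_j c j) *m Kb = 0 *m Kb.
    apply: trmx_inj; rewrite mul0mx trmx0 trmx_mul_row_lincomb -[RHS]c0.
    by apply: eq_bigr => j _; rewrite mxE.
  have /matrixP /(_ 0 i) := row_free_inj (row_base_free (kermx B)) cKb.
  by rewrite !mxE.
- move=> w /eqP; rewrite fixedE => /submxP [D wD].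
  by exists (fun i => D 0 i); rewrite -[w]trmxK wD trmx_mul_row_lincomb.
Qed.

Unset Implicit Arguments.

Theorem theorem1 (N : nat) (f : 'cV[R]_N -> R -> 'cV[R]_N) (T : R)
  (xs : R -> 'cV[R]_N) (K : 'M[R]_N) (Y0 : R -> 'M[R]_N) :
  0 < T ->
  C1 f ->
  (forall x t, f x (t + T) = f x t) ->
  periodic_solution f T xs ->
  fundamental_solution (linA f xs) Y0 ->
  has_dim `[-T, 0] (Y1_eigenspace1 (linA f xs) K T) (geom_mult1 (Y0 T)).
Proof.
move=> T0 fC1 fper [xs_per xs_sol] [Y0_0 Y0_deriv].
have A_cont := linA_continuous fC1 xs_sol.
have A_per := linA_periodic fper xs_per.
have [v [v_fix v_free v_span]] := fixed_space_basis (cmx (Y0 T)).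
exists (fun i => eigfun Y0 T (v i)); split; [|split].
- by move=> i; exact: eigfun_in_eigenspace.
- move=> c c0; apply: v_free; rewrite -[RHS](c0 0).
    by apply: eq_bigr => i _; rewrite eigfun0 v_fix.
  by rewrite /= in_itv /= lexx andbT oppr_le0 ltW.
- move=> phi /(eigenspace_eigfun A_cont Y0_deriv Y0_0 T0) [phi0_fix phiE].
  have [c phi0E] := v_span _ phi0_fix.
  by exists c => s /phiE ->; rewrite phi0E eigfun_lincomb.
Qed.
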